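(* Let $G$ be a connected simple graph on $n\geq 3$ vertices. Then $$\mathrm{v}(G)\leq \min\left\{\gamma_{e}(G),\left\lfloor\frac{n-1}{2}\right\rfloor\right\}.$$ Hence $\mathrm{v}(G)\leq \min\{m(G),\lfloor\frac{n-1}{2}\rfloor\}$.
   Context: For a simple graph $G$, $\mathrm{v}(G)$ denotes the v-number of the edge ideal $I(G)$; combinatorially, $\mathrm{v}(G)=\min\{|A| : A\subseteq V(G) \text{ is an independent set and } N_G(A) \text{ is a vertex cover of } G\}$, where $N_G(A)$ is the set of vertices adjacent to some vertex of $A$. (Equivalently, $\mathrm{v}(I)=\min\{\deg f : f \text{ homogeneous}, (I:f) \text{ prime}\}$.) A matching is a set of pairwise disjoint edges; $m(G)$ is the maximum size of a matching, and the edge domination number $\gamma_e(G)$ is the minimum size of a maximal (with respect to inclusion) matching of $G$. *)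

From mathcomp Require Import all_boot.
Set Implicit Arguments. Unset Strict Implicit. Unset Printing Implicit Defensive.

Section Graphs.
Variable T : finType.
Variable e : rel T.

Definition simple_graph : Prop := symmetric e /\ irreflexive e.

Definition connected_graph : Prop := forall x y : T, connect e x y.

Definition edges : {set {set T}} := [set [set x; y] | x in T, y in T & e x y].

Definition independent (A : {set T}) : bool :=
  [forall x in A, forall y in A, ~~ e x y].

Definition nbhd (A : {set T}) : {set T} := [set y | [exists x in A, e x y]].

Definition vertex_cover (C : {set T}) : bool :=
  [forall x, forall y, e x y ==> (x \in C) || (y \in C)].

(* v(G) = min{|A| : A independent, N_G(A) a vertex cover}
   (default #|T| if the family were empty; it is nonempty for graphs with edges) *)
Definition vnumber : nat :=
  \big[minn/#|T|]_(A : {set T} | independent A && vertex_cover (nbhd A)) #|A|.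

Definition matching (M : {set {set T}}) : bool := (M \subset edges) && trivIset M.

Definition maximal_matching (M : {set {set T}}) : bool :=
  matching M && [forall f in edges, (f \notin M) ==> ~~ matching (f |: M)].

Definition matching_number : nat := \max_(M : {set {set T}} | matching M) #|M|.

Definition edge_domination_number : nat :=
  \big[minn/#|T|]_(M : {set {set T}} | maximal_matching M) #|M|.

End Graphs.

From mathcomp Require Import all_boot all_order zify.
Set Implicit Arguments. Unset Strict Implicit. Unset Printing Implicit Defensive.
Import Order.TTheory.

(* If x lies in U and A is a witness for U minus the closed neighbourhood
   N[x], then x |: A is a witness for U, since the neighbours of x cover every
   edge meeting N[x].  Each greedy step thus costs one vertex.  Choosing x on a
   not yet met edge of a maximal matching M (whose edges meet every edge of G)
   takes at most |M| steps.  Choosing x on an arbitrary edge removes at least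
   two vertices per step; starting instead from a vertex with two neighbours,
   which exists in a connected graph on n >= 3 vertices, the first step removes
   three, whence (n-1)/2.  Finally a maximum matching is maximal. *)

Section VNumber.
Variable T : finType.
Variable e : rel T.
Hypothesis e_sym : symmetric e.
Hypothesis e_irr : irreflexive e.

Definition closed_nbhd (x : T) : {set T} := x |: nbhd e [set x].

Lemma in_closed_nbhd x y : (y \in closed_nbhd x) = (y == x) || e x y.
Proof.
rewrite in_setU1 inE; congr orb.
by apply/existsP/idP => [[z /andP[/set1P-> //]] | exy]; exists x; rewrite inE eqxx.
Qed.

Lemma in_nbhdU1 x A y : (y \in nbhd e (x |: A)) = e x y || (y \in nbhd e A).
Proof.
rewrite !inE; apply/existsP/orP => [[z /andP[/setU1P[-> -> | zA ezy]]] | ].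
- by left.
- by right; apply/existsP; exists z; rewrite zA.
- case=> [exy | /existsP[z /andP[zA ezy]]]; first by exists x; rewrite !inE eqxx.
  by exists z; rewrite !inE zA ezy orbT.
Qed.

(* [vwitness setT A] is the condition on [A] in [vnumber]; for other [U] it is
   the same condition in the induced subgraph G[U]. *)
Definition vwitness (U A : {set T}) : Prop :=
  [/\ A \subset U, independent e A &
      forall a b, a \in U -> b \in U -> e a b ->
        (a \in nbhd e A) || (b \in nbhd e A)].

Lemma vnumber_le_card : vnumber e <= #|T|.
Proof. exact: (@bigmin_le_id _ nat). Qed.

Lemma vnumber_le A : vwitness setT A -> vnumber e <= #|A|.
Proof.
case=> _ indA coverA; apply: (@bigmin_le_cond _ nat); rewrite indA /=.
apply/forallP => a; apply/forallP => b; apply/implyP; exact: coverA.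
Qed.

Lemma vwitness0 (U : {set T}) : {in U &, forall a b, ~~ e a b} -> vwitness U set0.
Proof.
move=> noedge; split; first exact: sub0set.
  by apply/forall_inP => a; rewrite inE.
by move=> a b aU bU eab; have := noedge a b aU bU; rewrite eab.
Qed.

Lemma vwitness_setU1 (U A : {set T}) x :
  x \in U -> vwitness (U :\: closed_nbhd x) A -> vwitness U (x |: A).
Proof.
move=> xU [sA indA coverA].
have farA a : a \in A -> (a != x) && ~~ e x a.
  by move/(subsetP sA); rewrite in_setD in_closed_nbhd negb_or => /andP[].
split.
- by rewrite subUset sub1set xU (subset_trans sA (subsetDl _ _)).
- apply/forall_inP => p pA; apply/forall_inP => q qA.
  move: pA qA; rewrite !in_setU1 => /orP[/eqP-> | pA] /orP[/eqP-> | qA].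
  + by rewrite e_irr.
  + by case/andP: (farA q qA).
  + by rewrite e_sym; case/andP: (farA p pA).
  + by move/forall_inP/(_ p pA)/forall_inP: indA; apply.
- move=> a b aU bU eab; rewrite !in_nbhdU1.
  case: (boolP (a \in closed_nbhd x)) => [|aN].
    by rewrite in_closed_nbhd => /orP[/eqP<- | ->]; rewrite ?eab ?orbT.
  case: (boolP (b \in closed_nbhd x)) => [|bN].
    by rewrite in_closed_nbhd => /orP[/eqP<- | ->]; rewrite ?(e_sym b a) ?eab ?orbT.
  have := coverA a b; rewrite !in_setD aN bN aU bU => /(_ isT isT eab).
  by case/orP=> ->; rewrite !orbT.
Qed.

Lemma vwitness_greedy (f : {set T} -> nat) :
  (forall (U : {set T}) a b, a \in U -> b \in U -> e a b ->
     exists2 x, x \in U & f (U :\: closed_nbhd x) < f U) ->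
  forall U, exists2 A, vwitness U A & #|A| <= f U.
Proof.
move=> shrink U; have [n] := ubnP (f U); elim: n U => // n IH U /ltnSE fU.
case: (boolP [exists a in U, exists b in U, e a b]); last first.
  move/exists_inPn => noedge; exists set0; last by rewrite cards0.
  by apply: vwitness0 => a b aU bU; move/exists_inPn: (noedge a aU); apply.
case/exists_inP => a aU /exists_inP[b bU eab].
have [x xU ltf] := shrink U a b aU bU eab.
have [A wA cardA] := IH _ (leq_trans ltf fU).
exists (x |: A); first exact: vwitness_setU1.
by rewrite cardsU1; case: (x \in A) => /=; lia.
Qed.

Lemma card_setD_closed_nbhd (U S : {set T}) x :
  S \subset U :&: closed_nbhd x -> #|U :\: closed_nbhd x| + #|S| <= #|U|.
Proof.
by move=> sS; rewrite -(cardsID (closed_nbhd x) U) addnC leq_add2r subset_leq_card.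
Qed.

Lemma exists_vwitness_half (U : {set T}) : exists2 A, vwitness U A & #|A| <= #|U| %/ 2.
Proof.
apply: (@vwitness_greedy (fun U => #|U| %/ 2)) => {}U a b aU bU eab.
exists a => //.
have ab : a != b by apply: contraTneq eab => ->; rewrite e_irr.
have := @card_setD_closed_nbhd U [set a; b] a.
rewrite cards2 ab !subUset !sub1set !in_setI aU bU !in_closed_nbhd eqxx eab orbT.
move=> /(_ isT); lia.
Qed.

Lemma exists_vwitness_cliques (B : {set {set T}}) :
  (forall K, K \in B -> {in K &, forall x y, x != y -> e x y}) ->
  (forall a b, e a b -> exists2 K, K \in B & (a \in K) || (b \in K)) ->
  exists2 A, vwitness setT A & #|A| <= #|B|.
Proof.
move=> cliqueB coverB.
(* The clique K met by the chosen x lies in N[x], so it stops meeting U. *)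
pose meets (U : {set T}) := [set K in B | [exists y in K, y \in U]].
suff [A wA cardA] : exists2 A, vwitness setT A & #|A| <= #|meets setT|.
  exists A => //; apply: leq_trans cardA (subset_leq_card _).
  by apply/subsetP => K; rewrite inE => /andP[].
apply: (@vwitness_greedy (fun U => #|meets U|)) => U a b aU bU eab.
have [K KB abK] := coverB a b eab.
have [x xU xK] : exists2 x, x \in U & x \in K.
  by case/orP: abK; [exists a | exists b].
exists x => //; apply: proper_card; rewrite properE; apply/andP; split.
  apply/subsetP => L; rewrite !inE => /andP[-> /exists_inP[y yL]].
  by rewrite in_setD => /andP[_ yU]; apply/exists_inP; exists y.
apply/subsetPn; exists K; rewrite !inE KB /=.
  by apply/exists_inP; exists x.
apply/exists_inPn => y yK; rewrite in_setD in_closed_nbhd negb_and negbK.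
by case: eqVneq => //= yx; rewrite (cliqueB K KB x y xK yK) // eq_sym.
Qed.

Lemma edgesP K : reflect (exists x y, e x y /\ K = [set x; y]) (K \in edges e).
Proof.
apply: (iffP idP) => [/imset2P[x y _] | [x [y [exy ->]]]].
  by rewrite inE => exy ->; exists x, y.
by apply/imset2P; exists x y; rewrite ?inE.
Qed.

Lemma edges_clique K : K \in edges e -> {in K &, forall x y, x != y -> e x y}.
Proof.
case/edgesP => x [y [exy ->]] p q.
by rewrite !inE => /orP[]/eqP-> /orP[]/eqP->; rewrite ?eqxx // e_sym.
Qed.

Lemma maximal_matching_meets M a b :
  maximal_matching e M -> e a b -> exists2 K, K \in M & (a \in K) || (b \in K).
Proof.
case/andP => /andP[sM trivM] /forall_inP maxM eab.
case: (boolP [exists K in M, (a \in K) || (b \in K)]) => [/exists_inP | missM].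
  by case=> K; exists K.
have abE : [set a; b] \in edges e by apply/edgesP; exists a, b.
have abM : [set a; b] \notin M.
  by apply: contra missM => abM; apply/exists_inP; exists [set a; b]; rewrite ?inE ?eqxx.
have set0M : set0 \notin M.
  apply/negP => /(subsetP sM)/edgesP[x [y [_ /setP/(_ x)]]].
  by rewrite !inE eqxx.
have disjM : {in M, forall K : {set T}, [disjoint [set a; b] & K]}.
  move=> K KM; rewrite -setI_eq0; apply/eqP/setP => q; rewrite !inE.
  apply/negP => /andP[/orP[]/eqP-> qK]; move/exists_inPn/(_ K KM): missM;
  by rewrite qK ?orbT.
have [trivMab _] := trivIsetU1 disjM trivM set0M.
have := maxM _ abE; rewrite abM /matching trivMab andbT.
by rewrite subUset sub1set abE sM.
Qed.

Lemma vnumber_le_maximal_matching M :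
  maximal_matching e M -> vnumber e <= #|M|.
Proof.
move=> maxM; case/andP: (maxM) => /andP[/subsetP sM _] _.
have [A wA cardA] := exists_vwitness_cliques
  (fun K KM => edges_clique (sM K KM)) (fun a b => maximal_matching_meets maxM).
exact: leq_trans (vnumber_le wA) cardA.
Qed.

Lemma vnumber_le_edge_domination : vnumber e <= edge_domination_number e.
Proof.
apply: (@le_bigmin _ nat); first exact: vnumber_le_card.
exact: vnumber_le_maximal_matching.
Qed.

Lemma edge_domination_le_matching : edge_domination_number e <= matching_number e.
Proof.
have : 0 < #|[pred M | matching e M]|.
  apply/card_gt0P; exists set0; rewrite inE /matching sub0set.
  by apply/trivIsetP => A B; rewrite inE.
case/(eq_bigmax_cond (fun M : {set {set T}} => #|M|)) => M0 matchM0 maxE.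
have mE : matching_number e = #|M0| := maxE.
have {}matchM0 : matching e M0 := matchM0.
rewrite mE; apply: (@bigmin_le_cond _ nat); rewrite /maximal_matching matchM0 /=.
apply/forall_inP => f _; apply/implyP => fM; apply/negP => matchf.
have := @leq_bigmax_cond _ (matching e) (fun M => #|M|) _ matchf.
by rewrite -/(matching_number e) mE cardsU1 fM ltnn.
Qed.

Lemma exists_two_neighbours : connected_graph e -> 2 < #|T| ->
  exists x y z, [/\ y != z, e x y & e x z].
Proof.
move=> conn cardT.
case: (boolP [exists x, exists y, exists z, [&& y != z, e x y & e x z]]).
  by case/existsP => x /existsP[y /existsP[z /and3P[]]]; exists x, y, z.
(* Otherwise N[u] is closed under e, hence all of T, yet has at most 2 vertices. *)
move/existsPn => none; exfalso.
have deg1 x y z : e x y -> e x z -> y = z.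
  move=> exy exz; apply/eqP/negPn; apply: contra (none x) => yz.
  by apply/existsP; exists y; apply/existsP; exists z; rewrite yz exy exz.
have [u _] := card_gt0P (ltnW (ltnW cardT)).
have Nclosed : closed e (closed_nbhd u).
  apply: intro_closed; first exact: sym_connect_sym.
  move=> x y exy; rewrite !in_closed_nbhd => /orP[/eqP<- | eux].
    by rewrite exy orbT.
  by rewrite (deg1 x y u) ?eqxx // e_sym.
have NT : closed_nbhd u = setT.
  apply/setP => y; rewrite in_setT -(closed_connect Nclosed (conn u y)).
  by rewrite in_closed_nbhd eqxx.
have : #|nbhd e [set u]| <= 1.
  apply/card_le1_eqP => y z; rewrite !inE => /exists_inP[u1 /set1P-> euy].
  by case/exists_inP => u2 /set1P-> euz; apply: deg1 euz euy.
by move: cardT; rewrite -cardsT -NT /closed_nbhd cardsU1; case: (_ \notin _) => /=; lia.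
Qed.

Lemma vnumber_le_half : connected_graph e -> 3 <= #|T| ->
  vnumber e <= (#|T| - 1) %/ 2.
Proof.
move=> conn cardT; have [x [y [z [yz exy exz]]]] := exists_two_neighbours conn cardT.
have xy : x != y by apply: contraTneq exy => ->; rewrite e_irr.
have xz : x != z by apply: contraTneq exz => ->; rewrite e_irr.
have := @card_setD_closed_nbhd setT [set x; y; z] x.
rewrite !subUset !sub1set !in_setI !in_setT !in_closed_nbhd eqxx exy exz !orbT.
move=> /(_ isT).
rewrite -setUA cardsU1 cards2 yz !inE negb_or xy xz cardsT /= => cardU.
have [A wA cardA] := exists_vwitness_half (setT :\: closed_nbhd x).
apply: leq_trans (vnumber_le (vwitness_setU1 (in_setT x) wA)) _.
by rewrite cardsU1; case: (x \in A) => /=; lia.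
Qed.

End VNumber.

Theorem proposition3p2 (T : finType) (e : rel T) :
  simple_graph e -> connected_graph e -> 3 <= #|T| ->
  vnumber e <= minn (edge_domination_number e) ((#|T| - 1) %/ 2) /\
  vnumber e <= minn (matching_number e) ((#|T| - 1) %/ 2).
Proof.
move=> [e_sym e_irr] conn cardT.
have v_le_half := vnumber_le_half e_sym e_irr conn cardT.
have v_le_gamma := vnumber_le_edge_domination e_sym e_irr.
rewrite !leq_min v_le_half v_le_gamma.
by rewrite (leq_trans v_le_gamma (edge_domination_le_matching e)).
Qed.
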